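(* Let $\mathbb{H}=\{z\in\mathbb{C}:\operatorname{Im}z>0\}$ and $z_1,z_2\in\mathbb{H}$. If $\operatorname{Re}(z_1)\ne\operatorname{Re}(z_2)$, put \[ \tilde z=\frac{\overline{z_1}z_1-\overline{z_2}z_2}{(z_1-z_2)+(\overline{z_1}-\overline{z_2})} \] (a real number). Then \[ b_{\mathbb{H},\infty}(z_1,z_2)=\begin{cases}\dfrac{2|\operatorname{Re}(z_1-z_2)|}{|z_1-\overline{z_2}|}, & \text{if } \min\{\operatorname{Re}z_1,\operatorname{Re}z_2\}<\tilde z<\max\{\operatorname{Re}z_1,\operatorname{Re}z_2\},\\[2mm] \dfrac{|z_1-z_2|}{\max\{\operatorname{Im}z_1,\operatorname{Im}z_2\}}, & \text{otherwise}.\end{cases} \]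
   Context: For a domain $G\subsetneq\mathbb{C}$ and $z_1,z_2\in G$, $b_{G,\infty}(z_1,z_2)=\sup_{w\in\partial G}\frac{|z_1-z_2|}{\max\{|z_1-w|,|z_2-w|\}}$; for $G=\mathbb{H}$, $\partial G=\mathbb{R}$. The ''otherwise'' case includes the case $\operatorname{Re}(z_1)=\operatorname{Re}(z_2)$. *)

From HB Require Import structures.
From mathcomp Require Import all_boot all_order all_algebra.
From mathcomp Require Import all_classical all_reals.
From mathcomp Require Export complex.
Set Implicit Arguments. Unset Strict Implicit. Unset Printing Implicit Defensive.
Import Order.TTheory GRing.Theory Num.Theory.
Local Open Scope ring_scope.
Local Open Scope classical_set_scope.

Definition upper_half_plane (R : realType) : set R[i] :=
  [set z | 0 < complex.Im z].

Definition b_H_inf (R : realType) (z1 z2 : R[i]) : R :=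
  sup [set ComplexField.Normc.normc (z1 - z2) / Num.max (ComplexField.Normc.normc (z1 - (w%:C)%C)) (ComplexField.Normc.normc (z2 - (w%:C)%C))
      | w in [set: R]].

From HB Require Import structures.
From mathcomp Require Import all_boot all_order all_algebra.
From mathcomp Require Import all_classical all_reals.
From mathcomp Require Import complex.
From mathcomp Require Import ring lra.
Import Order.TTheory GRing.Theory Num.Theory.
Local Open Scope ring_scope.
Local Open Scope classical_set_scope.

(* For real w, |z1 - z2| / max(|z1 - w|, |z2 - w|) is largest where
   m(w) = max(|z1 - w|^2, |z2 - w|^2) is smallest.  The difference
   |z1 - w|^2 - |z2 - w|^2 is affine in w and vanishes at the point t where the
   perpendicular bisector of [z1, z2] meets the real axis.  If t lies strictly
   between Re z1 and Re z2, then m is minimal at t, with value |z1 - t|^2, and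
   |z1 - z2| |z1 - conj z2| = 2 |Re (z1 - z2)| |z1 - t|.  Otherwise one point,
   say z2, is no farther from Re z1 than z1 is, so m(Re z1) = (Im z1)^2, which
   is also max(Im z1, Im z2)^2 and a lower bound of m everywhere. *)

Section MinimaxOnRealLine.
Context {R : realFieldType}.

Definition maxdist2 (x1 y1 x2 y2 w : R) : R :=
  Num.max ((x1 - w) ^+ 2 + y1 ^+ 2) ((x2 - w) ^+ 2 + y2 ^+ 2).

(* The point t (junk value 0 when x1 = x2). *)
Definition bisector_foot (x1 y1 x2 y2 : R) : R :=
  (x1 ^+ 2 + y1 ^+ 2 - x2 ^+ 2 - y2 ^+ 2) / (2 * (x1 - x2)).

Definition bisector_between_feet (x1 y1 x2 y2 : R) : bool :=
  (x1 != x2) && (Num.min x1 x2 < bisector_foot x1 y1 x2 y2) &&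
  (bisector_foot x1 y1 x2 y2 < Num.max x1 x2).

Lemma bisector_between_feetE (x1 y1 x2 y2 : R) :
  bisector_between_feet x1 y1 x2 y2 =
  (y1 ^+ 2 < (x1 - x2) ^+ 2 + y2 ^+ 2) && (y2 ^+ 2 < (x1 - x2) ^+ 2 + y1 ^+ 2).
Proof.
rewrite /bisector_between_feet; set t := bisector_foot _ _ _ _.
have [<-|x12] := eqVneq x1 x2.
  by rewrite subrr expr0n /= !add0r; apply/esym/negbTE; apply/andP; lra.
have e1 : 2 * (x1 - x2) * (x1 - t) = (x1 - x2) ^+ 2 + y2 ^+ 2 - y1 ^+ 2.
  by rewrite /t /bisector_foot; field; rewrite subr_eq0.
have e2 : 2 * (x1 - x2) * (t - x2) = (x1 - x2) ^+ 2 + y1 ^+ 2 - y2 ^+ 2.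
  by rewrite /t /bisector_foot; field; rewrite subr_eq0.
case: (ltgtP x1 x2) x12 => // [x12 | x21] _ /=.
  by apply/andP/andP => -[h1 h2]; split; nra.
by apply/andP/andP => -[h1 h2]; split; nra.
Qed.

Lemma maxdist2C (x1 y1 x2 y2 w : R) : maxdist2 x1 y1 x2 y2 w = maxdist2 x2 y2 x1 y1 w.
Proof. exact: maxC. Qed.

Lemma sqr_max_le_maxdist2 (x1 y1 x2 y2 w : R) :
  Num.max y1 y2 ^+ 2 <= maxdist2 x1 y1 x2 y2 w.
Proof.
rewrite /maxdist2 le_max; case: (leP y1 y2) => _.
  by rewrite lerDr sqr_ge0 orbT.
by rewrite lerDr sqr_ge0.
Qed.

Lemma maxdist2_foot (x1 y1 x2 y2 : R) : 0 <= y1 -> 0 <= y2 ->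
  (x1 - x2) ^+ 2 + y2 ^+ 2 <= y1 ^+ 2 -> maxdist2 x1 y1 x2 y2 x1 = Num.max y1 y2 ^+ 2.
Proof.
move=> y1_ge0 y2_ge0 covered.
have y21 : y2 <= y1 by rewrite -ler_sqr ?nnegrE //; have := sqr_ge0 (x1 - x2); lra.
rewrite /maxdist2 subrr expr0n add0r -[x2 - x1]opprB sqrrN.
by rewrite (max_l covered) (max_l y21).
Qed.

Lemma maxdist2_attains_sqr_max (x1 y1 x2 y2 : R) : 0 <= y1 -> 0 <= y2 ->
  ~~ bisector_between_feet x1 y1 x2 y2 ->
  exists w0, maxdist2 x1 y1 x2 y2 w0 = Num.max y1 y2 ^+ 2.
Proof.
move=> y1_ge0 y2_ge0; rewrite bisector_between_feetE negb_and -!leNgt.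
case/orP=> covered; first by exists x1; apply: maxdist2_foot.
exists x2; rewrite maxdist2C maxC; apply: maxdist2_foot => //.
by rewrite -[x2 - x1]opprB sqrrN.
Qed.

Lemma sqdist_sub_bisector_foot (x1 y1 x2 y2 w : R) : x1 != x2 ->
  (x1 - w) ^+ 2 + y1 ^+ 2 - ((x2 - w) ^+ 2 + y2 ^+ 2) =
  2 * (x1 - x2) * (bisector_foot x1 y1 x2 y2 - w).
Proof. by move=> x12; rewrite /bisector_foot; field; rewrite subr_eq0. Qed.

Lemma maxdist2_bisector_foot (x1 y1 x2 y2 : R) (t := bisector_foot x1 y1 x2 y2) :
  x1 != x2 -> maxdist2 x1 y1 x2 y2 t = (x1 - t) ^+ 2 + y1 ^+ 2.
Proof.
move=> x12; have /eqP := sqdist_sub_bisector_foot x1 y1 x2 y2 t x12.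
by rewrite subrr mulr0 subr_eq0 /maxdist2 => /eqP <-; rewrite maxxx.
Qed.

Lemma maxdist2_bisector_foot_min (x1 y1 x2 y2 : R) (t := bisector_foot x1 y1 x2 y2) :
  bisector_between_feet x1 y1 x2 y2 ->
  forall w, maxdist2 x1 y1 x2 y2 t <= maxdist2 x1 y1 x2 y2 w.
Proof.
move=> /andP[/andP[x12 t_gt] t_lt] w; rewrite -/t in t_gt t_lt.
have := sqdist_sub_bisector_foot x1 y1 x2 y2 t x12.
rewrite subrr mulr0 (maxdist2_bisector_foot x1 y1 x2 y2 x12) /maxdist2 le_max -/t.
move=> /eqP; rewrite subr_eq0 => /eqP equidistant.
(* For w >= t (resp. w <= t), the point whose foot lies on the other side of t
   is farther from w than from t. *)
case: (ltgtP x1 x2) t_gt t_lt x12 => // [x12' | x21] t_gt t_lt _.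
  by case: (leP t w) => tw; apply/orP; [left | right]; nra.
by case: (leP t w) => tw; apply/orP; [right | left]; nra.
Qed.

Lemma sqdist_bisector_foot (x1 y1 x2 y2 : R) (t := bisector_foot x1 y1 x2 y2) :
  x1 != x2 ->
  ((x1 - x2) ^+ 2 + (y1 - y2) ^+ 2) * ((x1 - x2) ^+ 2 + (y1 + y2) ^+ 2) =
  (2 * (x1 - x2)) ^+ 2 * ((x1 - t) ^+ 2 + y1 ^+ 2).
Proof. by move=> x12; rewrite /t /bisector_foot; field; rewrite subr_eq0. Qed.

End MinimaxOnRealLine.

Lemma sqrtr_max (R : rcfType) (a b : R) :
  Num.sqrt (Num.max a b) = Num.max (Num.sqrt a) (Num.sqrt b).
Proof.
by case: (leP a b) => ab; [rewrite !max_r | rewrite !max_l] => //;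
  rewrite ler_wsqrtr // ltW.
Qed.

Lemma sqrtr_div_eq (R : rcfType) (p q r s : R) :
  0 <= p -> 0 < q -> 0 <= r -> 0 < s -> p * s = r * q ->
  Num.sqrt p / Num.sqrt q = Num.sqrt r / Num.sqrt s.
Proof.
move=> p_ge0 q_gt0 r_ge0 s_gt0 cross.
rewrite -(sqrtrV (ltW q_gt0)) -(sqrtrV (ltW s_gt0)) -!sqrtrM //.
suff -> : p / q = r / s by [].
by apply/eqP; rewrite eqr_div ?lt0r_neq0 //; apply/eqP.
Qed.

Lemma sup_image_max (R : realType) (T : Type) (A : set T) (f : T -> R) (t0 : T) :
  A t0 -> (forall t, A t -> f t <= f t0) -> sup (f @` A) = f t0.
Proof.
move=> At0 f_le; apply/le_anti/andP; split.
  by apply: ge_sup; [exists (f t0), t0 | move=> _ [t At <-]; apply: f_le].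
apply: sup_upper_bound; last by exists t0.
by split; [exists (f t0), t0 | exists (f t0) => _ [t At <-]; apply: f_le].
Qed.

Section UpperHalfPlane.
Context {R : realType}.
Local Open Scope complex_scope.

(* Both sides are 0 when Re z1 = Re z2, by the convention x / 0 = 0. *)
Lemma bisector_footE (z1 z2 : R[i]) :
  complex.Re ((conjc z1 * z1 - conjc z2 * z2) / ((z1 - z2) + (conjc z1 - conjc z2))) =
  bisector_foot (complex.Re z1) (complex.Im z1) (complex.Re z2) (complex.Im z2).
Proof.
case: z1 z2 => [x1 y1] [x2 y2]; rewrite /= /bisector_foot.
have -> : y1 - y2 + (- y1 - - y2) = 0 by ring.
have -> : x1 - x2 + (x1 - x2) = 2 * (x1 - x2) by ring.
rewrite expr0n /= addr0 mul0r oppr0 mulr0 subr0.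
have [<-|x12] := eqVneq x1 x2; last by field; rewrite subr_eq0.
by rewrite subrr !mulr0 mul0r invr0 !mulr0.
Qed.

Lemma b_H_infE (x1 y1 x2 y2 : R) :
  b_H_inf (x1 +i* y1) (x2 +i* y2) =
  sup [set Num.sqrt ((x1 - x2) ^+ 2 + (y1 - y2) ^+ 2) /
           Num.sqrt (maxdist2 x1 y1 x2 y2 w) | w in [set: R]].
Proof.
rewrite /b_H_inf /=; congr sup; apply: eq_imagel => w _.
by rewrite !subr0 sqrtr_max.
Qed.

Lemma b_H_inf_minimax (x1 y1 x2 y2 w0 : R) :
  0 < maxdist2 x1 y1 x2 y2 w0 ->
  (forall w, maxdist2 x1 y1 x2 y2 w0 <= maxdist2 x1 y1 x2 y2 w) ->
  b_H_inf (x1 +i* y1) (x2 +i* y2) =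
  Num.sqrt ((x1 - x2) ^+ 2 + (y1 - y2) ^+ 2) / Num.sqrt (maxdist2 x1 y1 x2 y2 w0).
Proof.
move=> min_gt0 min_le; rewrite b_H_infE; apply: sup_image_max => // w _.
apply: ler_wpM2l; first exact: sqrtr_ge0.
by rewrite lef_pV2 ?posrE ?sqrtr_gt0 ?ler_wsqrtr // (lt_le_trans min_gt0).
Qed.

Lemma b_H_inf_bisector (x1 y1 x2 y2 : R) : 0 < y1 -> 0 < y2 ->
  bisector_between_feet x1 y1 x2 y2 ->
  b_H_inf (x1 +i* y1) (x2 +i* y2) =
  2 * `|x1 - x2| / Num.sqrt ((x1 - x2) ^+ 2 + (y1 + y2) ^+ 2).
Proof.
move=> y1_gt0 y2_gt0 between; have /andP[/andP[x12 _] _] := between.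
set t := bisector_foot x1 y1 x2 y2.
have maxdist2_t := maxdist2_bisector_foot x1 y1 x2 y2 x12; rewrite -/t in maxdist2_t.
have t_gt0 : 0 < (x1 - t) ^+ 2 + y1 ^+ 2 by rewrite ltr_wpDl ?sqr_ge0 ?exprn_gt0.
rewrite (b_H_inf_minimax _ _ _ _ t _ (maxdist2_bisector_foot_min x1 y1 x2 y2 between)) maxdist2_t //.
have -> : 2 * `|x1 - x2| = Num.sqrt ((2 * (x1 - x2)) ^+ 2).
  by rewrite sqrtr_sqr normrM normr_nat.
apply: sqrtr_div_eq => //; last exact: sqdist_bisector_foot.
- by rewrite addr_ge0 ?sqr_ge0.
- exact: sqr_ge0.
- by rewrite ltr_wpDl ?sqr_ge0 ?exprn_gt0 ?addr_gt0.
Qed.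

Lemma b_H_inf_max_Im (x1 y1 x2 y2 : R) : 0 < y1 -> 0 < y2 ->
  ~~ bisector_between_feet x1 y1 x2 y2 ->
  b_H_inf (x1 +i* y1) (x2 +i* y2) =
  Num.sqrt ((x1 - x2) ^+ 2 + (y1 - y2) ^+ 2) / Num.max y1 y2.
Proof.
move=> y1_gt0 y2_gt0 not_between.
have [w0 w0_max] :=
  maxdist2_attains_sqr_max x1 y1 x2 y2 (ltW y1_gt0) (ltW y2_gt0) not_between.
rewrite (b_H_inf_minimax _ _ _ _ w0) w0_max.
- by rewrite sqrtr_sqr ger0_norm // le_max ltW.
- by rewrite exprn_gt0 // lt_max y1_gt0.
- by move=> w; rewrite sqr_max_le_maxdist2.
Qed.

End UpperHalfPlane.

Theorem theorem3p26 (R : realType) (z1 z2 : R[i]) :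
  z1 \in @upper_half_plane R -> z2 \in @upper_half_plane R ->
  let zt := complex.Re ((conjc z1 * z1 - conjc z2 * z2) /
                        ((z1 - z2) + (conjc z1 - conjc z2))) in
  b_H_inf z1 z2 =
  if (complex.Re z1 != complex.Re z2) &&
     (Num.min (complex.Re z1) (complex.Re z2) < zt) &&
     (zt < Num.max (complex.Re z1) (complex.Re z2))
  then 2 * `|complex.Re (z1 - z2)| / ComplexField.Normc.normc (z1 - conjc z2)
  else ComplexField.Normc.normc (z1 - z2) / Num.max (complex.Im z1) (complex.Im z2).
Proof.
rewrite !inE /upper_half_plane /= => y1_gt0 y2_gt0; rewrite bisector_footE.
case: z1 z2 y1_gt0 y2_gt0 => [x1 y1] [x2 y2] /= y1_gt0 y2_gt0.
case: ifP => [between | /negbT not_between].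
  by rewrite opprK b_H_inf_bisector.
exact: b_H_inf_max_Im.
Qed.
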